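(* In the setting of the context, for every $j\in[N]$, $s\in\Gamma$, $k\in[n]$ and $\dagger\in\{+,-\}$, one has $u^\dagger_k\le h^\dagger_k$ pointwise on $S_f^{sP}$.
   Context: Standing setting: $\Gamma$ countably infinite, $n\in\mathbb N$, $\mathbb Z\Gamma$ the integral group ring (product $(fg)_t=\sum_sf_{ts^{-1}}g_s$, involution $(f^* )_s=f_{s^{-1}}$, $(f^* )^{(km)}=(f^{(mk)})^*$). $f=M-g\in M_n(\mathbb Z\Gamma)$, $M=\mathrm{diag}(M_1,\dots,M_n)$ positive integers, $M_k>\sum_m\|g^{(km)}\|_1$, and a subsemigroup $P\subseteq\Gamma\setminus\{e_\Gamma\}$ containing all $\mathrm{supp}(g^{(km)})$; $\bar P=P\cup\{e_\Gamma\}$, $\bar M=\max_kM_k$, $S_f=\prod_k\{0,\dots,M_k-1\}$, $Y=S_f^\Gamma$ (row vectors, entries $y_{s,k}$, $(yF)_m=\sum_ky_kF^{(km)}$ by convolution). For $E\subseteq\Gamma$, $\pi_E:S_f^\Gamma\to S_f^E$ is the restriction. $N\ge\bar M\|(f^* )^{-1}\|_{1,\infty}$ fixed integer, $V=(\{-N,\dots,N\}^\Gamma)^n\setminus\{0\}$, $Z=\{(y,c)\in Y\times V:y+cf^*\in Y\}$, $\varphi:Y\times V\to Y$ the projection, $Z^+_{j,s,k}=\{(y,c)\in Z:\max_{t,m}|c_{t,m}|=c_{s,k}=j\}$, $Z^-_{j,s,k}=\{(y,c)\in Z:\max_{t,m}|c_{t,m}|=-c_{s,k}=j\}$. $A_k=\{(a,m):g^{(km)}_a\neq0\}$;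 for $B_k\subseteq A_k$, $\dagger\in\{+,-\}$ (signs $\pm1$), $Z^\dagger_{j,s,k,B_k}$ is the set of $(y,c)\in Z^\dagger_{j,s,k}$ with $c_{sa,m}=\dagger\mathrm{sgn}(g^{(km)}_a)j$ for $(a,m)\in B_k$ and $c_{sa,m}\neq\dagger\mathrm{sgn}(g^{(km)}_a)j$ for $(a,m)\in A_k\setminus B_k$; $Z^\dagger_{j,s,k,B_k,i}=\{(y,c)\in Z^\dagger_{j,s,k,B_k}:y_{s,k}=i\}$. Functions on $S_f^{sP}$: $u^\dagger_k=\sum_{i=0}^{M_k-1}\chi_{\pi_{sP}\varphi(\bigcup_{B_k\subseteq A_k}Z^\dagger_{j,s,k,B_k,i})}$ and $h^\dagger_k=\sum_{(a,m)\in A_k}|g^{(km)}_a|\,\chi_{\pi_{sa\bar P}\varphi(Z^{\dagger\mathrm{sgn}(g^{(km)}_a)}_{j,sa,m})\times S_f^{sP\setminus sa\bar P}}$ (note $sa\bar P\subseteq sP$ since $a\in P$; $Z^{\pm\cdot\pm}$ means $Z^+$ or $Z^-$ according to the product sign). *)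

From HB Require Import structures.
From mathcomp Require Import all_boot all_order all_algebra.
From mathcomp Require Import boolp classical_sets reals constructive_ereal ereal esum.
From mathcomp Require Import Rstruct.
From Stdlib Require Import Rdefinitions.
Local Notation R := Rdefinitions.R.

Set Implicit Arguments.
Unset Strict Implicit.
Unset Printing Implicit Defensive.

Import Order.TTheory GRing.Theory Num.Theory.
Local Open Scope ring_scope.

Record cgroup := CGroup {
  cg_sort :> countType;
  cg_mul : cg_sort -> cg_sort -> cg_sort;
  cg_inv : cg_sort -> cg_sort;
  cg_one : cg_sort;
  cg_mulA : associative cg_mul;
  cg_mul1g : left_id cg_one cg_mul;
  cg_mulg1 : right_id cg_one cg_mul;
  cg_mulVg : forall x, cg_mul (cg_inv x) x = cg_one;
  cg_mulgV : forall x, cg_mul x (cg_inv x) = cg_one;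
  cg_invK : forall x, cg_inv (cg_inv x) = x }.

Arguments cg_mul {c}.
Arguments cg_inv {c}.
Arguments cg_one {c}.

Section GroupRing.
Variable G : cgroup.
Local Notation "x ** y" := (cg_mul x y) (at level 40, left associativity).
Local Notation "x ^-1g" := (cg_inv x) (at level 3).
Local Notation e := (@cg_one G).

(* Elements of the integral group ring ZG: finitely supported functions
   G -> int, packaged with a finite list containing their support. *)
Record ZG := MkZG {
  zg_coef :> G -> int;
  zg_supp : seq G;
  zg_suppP : forall a, zg_coef a != 0 -> a \in zg_supp }.

(* support list without repetitions; the actual support is
   [seq a <- zg_usupp f | f a != 0] *)
Definition zg_usupp (f : ZG) : seq G := undup (zg_supp f).

Definition zg_norm1 (f : ZG) : nat := \sum_(a <- zg_usupp f) `|f a|%N.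

Lemma zg_delta_suppP (x : int) :
  forall a, (if a == e then x else 0) != 0 -> a \in [:: e].
Proof. by move=> a; rewrite inE; case: (a == e); rewrite ?eqxx. Qed.
Definition zg_delta (x : int) : ZG := MkZG (@zg_delta_suppP x).

Lemma zg_sub_suppP (f g : ZG) :
  forall a, f a - g a != 0 -> a \in zg_supp f ++ zg_supp g.
Proof.
move=> a; rewrite mem_cat; case Hf: (f a == 0).
  by move/eqP: Hf => ->; rewrite sub0r oppr_eq0 => /zg_suppP ->; rewrite orbT.
by rewrite (zg_suppP (negbT Hf)).
Qed.
Definition zg_sub (f g : ZG) : ZG := MkZG (@zg_sub_suppP f g).

Lemma zg_star_suppP (f : ZG) :
  forall a, f (a ^-1g) != 0 -> a \in map cg_inv (zg_supp f).
Proof.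
move=> a /zg_suppP H; apply/mapP; exists (a ^-1g) => //; by rewrite cg_invK.
Qed.
Definition zg_star (f : ZG) : ZG := MkZG (@zg_star_suppP f).

End GroupRing.

Section Setting.
Variables (Gam : cgroup) (n : nat).
Local Notation "x ** y" := (cg_mul x y) (at level 40, left associativity).
Local Notation "x ^-1g" := (cg_inv x) (at level 3).

Definition rvmul (y : Gam -> 'I_n -> int) (F : 'I_n -> 'I_n -> ZG Gam)
  (t : Gam) (m : 'I_n) : int :=
  \sum_(k < n) \sum_(s <- zg_usupp (F k m)) y (t ** s ^-1g) k * F k m s.

Definition fmat (M : 'I_n -> nat) (g : 'I_n -> 'I_n -> ZG Gam) k m : ZG Gam :=
  zg_sub (zg_delta Gam (if k == m then (M k)%:Z else 0)) (g k m).

Definition fstar (M : 'I_n -> nat) (g : 'I_n -> 'I_n -> ZG Gam) k m : ZG Gam :=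
  zg_star (fmat M g m k).

Definition l1norm (b : Gam -> R) : \bar R :=
  (\esum_(t in [set: Gam]) (`|b t|)%:E)%E.

(* products  A F  and  F A  for A in M_n(ZGam) and F in M_n(l^1 Gam):
   (A F)^{(km)}_t = sum_l sum_s A^{(kl)}_{t s^-1} F^{(lm)}_s
                  = sum_l sum_{r in supp A^{(kl)}} A^{(kl)}_r F^{(lm)}_{r^-1 t} *)
Definition zl_mul (A : 'I_n -> 'I_n -> ZG Gam) (F : 'I_n -> 'I_n -> Gam -> R)
  k m t : R :=
  \sum_(l < n) \sum_(r <- zg_usupp (A k l)) (A k l r)%:~R * F l m (r ^-1g ** t).
Definition lz_mul (F : 'I_n -> 'I_n -> Gam -> R) (A : 'I_n -> 'I_n -> ZG Gam)
  k m t : R :=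
  \sum_(l < n) \sum_(s <- zg_usupp (A l m)) F k l (t ** s ^-1g) * (A l m s)%:~R.
Definition l1_id (k m : 'I_n) (t : Gam) : R :=
  if (k == m) && (t == cg_one) then 1 else 0.

Definition is_l1_inverse (A : 'I_n -> 'I_n -> ZG Gam)
  (F : 'I_n -> 'I_n -> Gam -> R) : Prop :=
  (forall k m, (l1norm (F k m) < +oo)%E) /\
  (forall k m t, zl_mul A F k m t = l1_id k m t) /\
  (forall k m t, lz_mul F A k m t = l1_id k m t).

(* ||F||_{1,oo}: operator norm of y |-> yF on l^oo row vectors,
   i.e. max_m sum_k ||F^{(km)}||_1 *)
Definition norm1inf (F : 'I_n -> 'I_n -> Gam -> R) : \bar R :=
  (\big[Order.max/0%E]_(m < n) \sum_(k < n) l1norm (F k m))%E.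

Variables (M : 'I_n -> nat) (g : 'I_n -> 'I_n -> ZG Gam) (N : nat).

Definition inY (y : Gam -> 'I_n -> int) : Prop :=
  forall t k, 0 <= y t k < (M k)%:Z.

Definition inV (c : Gam -> 'I_n -> int) : Prop :=
  (forall t k, `|c t k| <= N%:Z) /\ exists t k, c t k != 0.

Definition inZ y c : Prop :=
  inY y /\ inV c /\ inY (fun t m => y t m + rvmul c (fstar M g) t m).

Definition Zdag (dag : int) (j : nat) (s : Gam) (k : 'I_n) y c : Prop :=
  inZ y c /\ (forall t m, `|c t m| <= j%:Z) /\ c s k = dag * j%:Z.

Definition ZdagB dag j s k (B : Gam -> 'I_n -> Prop) y c : Prop :=
  Zdag dag j s k y c /\
  forall a m, g k m a != 0 ->
    (B a m -> c (s ** a) m = dag * sgz (g k m a) * j%:Z) /\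
    (~ B a m -> c (s ** a) m != dag * sgz (g k m a) * j%:Z).

Definition ZdagBi dag j s k B (i : nat) y c : Prop :=
  ZdagB dag j s k B y c /\ y s k = i%:Z.

Variable P : Gam -> Prop.
Definition in_sP (s t : Gam) : Prop := exists p, P p /\ t = s ** p.
Definition in_sPbar (s t : Gam) : Prop := t = s \/ in_sP s t.

(* An element of S_f^{sP} is represented by x : Gam -> 'I_n -> int whose
   values on sP lie in S_f; its values off sP are irrelevant. *)

(* u^dag_k(x) = sum_{i<M_k} chi_{pi_{sP} phi (U_{B subset A_k} Z^dag_{j,s,k,B,i})}(x) *)
Definition u_fun dag j s k (x : Gam -> 'I_n -> int) : nat :=
  \sum_(i < M k)
    (asbool (exists y c,
       (exists B : Gam -> 'I_n -> Prop,
          (forall a m, B a m -> g k m a != 0) /\ ZdagBi dag j s k B i y c) /\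
       (forall t, in_sP s t -> forall m, y t m = x t m)) : nat).

(* h^dag_k(x) = sum_{(a,m) in A_k} |g^{(km)}_a|
     chi_{pi_{s a Pbar} phi (Z^{dag sgn(g^{(km)}_a)}_{j,sa,m}) x S_f^{sP \ saPbar}}(x) *)
Definition h_fun dag j s k (x : Gam -> 'I_n -> int) : nat :=
  \sum_(m < n) \sum_(a <- zg_usupp (g k m) | g k m a != 0)
    `|g k m a|%N *
    (asbool (exists y c,
       Zdag (dag * sgz (g k m a)) j (s ** a) m y c /\
       (forall t, in_sPbar (s ** a) t -> forall m', y t m' = x t m')) : nat).

End Setting.

From HB Require Import structures.
From mathcomp Require Import all_boot all_order all_algebra.
From mathcomp Require Import boolp classical_sets reals constructive_ereal ereal esum.
From mathcomp Require Import Rstruct.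
From mathcomp Require Import zify.
Import Order.TTheory GRing.Theory Num.Theory.
Local Open Scope ring_scope.

(* Fix i counted by u^dag_k(x): some (y, c) in Z^dag_{j,s,k,B,i} agrees with x
   on sP.  The (s,k) coordinate of y + c f^* lies in [0, M_k), and
     (c f^* )_{s,k} = M_k c_{s,k} - T,   T = sum_{m,a} c_{sa,m} g^{(km)}_a
   (rvmul_fstar_at).  Each term dag c_{sa,m} g_a is at most (j-1)|g_a|, plus
   |g_a| exactly when c_{sa,m} = dag sgn(g_a) j (signed_term_bound); in that
   case (y, c) itself witnesses the (a,m)-indicator of h^dag_k, because
   sa Pbar is contained in sP (h_indicator_witness).  Summing, dag T is at most
   (j-1) W + h with W = sum |g_a| < M_k (signed_sum_bound), hence i < h when
   dag = +1 and i >= M_k - h when dag = -1 (u_index_bound).  Either way at most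
   h indices i < M_k are counted (count_below, count_above).
   Only j >= 1, the domination M_k > sum_m ||g^{(km)}||_1 and the facts that P
   is a semigroup containing the supports of g are needed. *)

(* Two duplicate-free lists covering the support of F give the same sum:
   both sums equal the sum over the support itself. *)
Lemma big_supp_eq (T : eqType) (L1 L2 : seq T) (F : T -> int) :
  uniq L1 -> uniq L2 -> (forall t, F t != 0 -> t \in L1) ->
  (forall t, F t != 0 -> t \in L2) ->
  \sum_(t <- L1) F t = \sum_(t <- L2) F t.
Proof.
have on_supp L : \sum_(t <- L) F t = \sum_(t <- [seq t <- L | F t != 0]) F t.
  by rewrite big_filter [RHS]big_mkcond; apply: eq_bigr => t _; case: eqP.
move=> u1 u2 H1 H2; rewrite on_supp [RHS]on_supp; apply/perm_big/uniq_perm.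
- exact: filter_uniq.
- exact: filter_uniq.
move=> t; rewrite !mem_filter.
by case Ft: (F t != 0); rewrite ?(H1 _ Ft) ?(H2 _ Ft).
Qed.

Section GroupRingFacts.
Variable Gam : cgroup.
Local Notation e := (@cg_one Gam).

Lemma cg_inv_inj : injective (@cg_inv Gam).
Proof. exact: can_inj (@cg_invK Gam). Qed.

Lemma cg_inv_eq1 (t : Gam) : (cg_inv t == e) = (t == e).
Proof.
apply/eqP/eqP => [te|->]; last by rewrite -[RHS](cg_mulVg e) cg_mulg1.
by rewrite -[t]cg_invK te -[RHS](cg_mulVg e) cg_mulg1.
Qed.

Lemma zg_sum_supp (f : ZG Gam) (L : seq Gam) (F : Gam -> int) :
  uniq L -> (forall t, f t != 0 -> t \in L) ->
  \sum_(t <- zg_usupp f) F t * f t = \sum_(t <- L) F t * f t.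
Proof.
move=> uL HL; apply: big_supp_eq; rewrite ?undup_uniq // => t.
  by rewrite mulf_eq0 negb_or => /andP[_ /zg_suppP]; rewrite mem_undup.
by rewrite mulf_eq0 negb_or => /andP[_ /HL].
Qed.

Variables (n : nat) (M : 'I_n -> nat) (g : 'I_n -> 'I_n -> ZG Gam).

Lemma fstar_coef (m k : 'I_n) (t : Gam) :
  fstar M g m k t = (if t == e then (if k == m then (M k)%:Z else 0) else 0)
                    - g k m (cg_inv t).
Proof. by rewrite /fstar /fmat /= cg_inv_eq1. Qed.

(* The m-th contribution to (c f^* )_{s,k}: substituting t = a^-1, it is
   delta_{km} M_k c_{s,m} - sum_a c_{sa,m} g^{(km)}_a. *)
Lemma fstar_column_sum (c : Gam -> 'I_n -> int) (s : Gam) (k m : 'I_n) :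
  \sum_(t <- zg_usupp (fstar M g m k)) c (cg_mul s (cg_inv t)) m * fstar M g m k t
  = c s m * (if k == m then (M k)%:Z else 0)
    - \sum_(a <- zg_usupp (g k m)) c (cg_mul s a) m * g k m a.
Proof.
pose L := undup (e :: zg_supp (g k m)).
have uL : uniq L by exact: undup_uniq.
have gL a : g k m a != 0 -> a \in L by move/zg_suppP; rewrite mem_undup inE orbC => ->.
rewrite (@zg_sum_supp _ (map cg_inv L)); first last.
- move=> t; rewrite fstar_coef; case: ifP => [/eqP-> _|_].
    apply/mapP; exists e; first by rewrite mem_undup inE eqxx.
    by apply/eqP; rewrite eq_sym cg_inv_eq1.
  rewrite sub0r oppr_eq0 => /gL tL; apply/mapP; exists (cg_inv t) => //.
  by rewrite cg_invK.
- by rewrite map_inj_uniq //; exact: cg_inv_inj.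
rewrite big_map (@zg_sum_supp _ L) //.
under eq_bigr => a _ do rewrite fstar_coef !cg_invK cg_inv_eq1 mulrBr.
rewrite sumrB; congr (_ - _).
rewrite (bigD1_seq e) ?mem_undup ?inE ?eqxx //= cg_mulg1 big1 ?addr0 //.
by move=> a /negbTE->; rewrite mulr0.
Qed.

Lemma rvmul_fstar_at (c : Gam -> 'I_n -> int) (s : Gam) (k : 'I_n) :
  rvmul c (fstar M g) s k = c s k * (M k)%:Z -
    \sum_(m < n) \sum_(a <- zg_usupp (g k m)) c (cg_mul s a) m * g k m a.
Proof.
rewrite /rvmul (eq_bigr _ (fun m _ => fstar_column_sum c s k m)) sumrB.
congr (_ - _); rewrite (bigD1 k) //= eqxx big1 ?addr0 // => m.
by rewrite eq_sym => /negbTE->; rewrite mulr0.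
Qed.
End GroupRingFacts.

Lemma count_below (m h : nat) (F : 'I_m -> bool) :
  (forall i : 'I_m, F i -> i < h)%N -> (\sum_(i < m) F i <= h)%N.
Proof.
elim: m F => [|m IH] F HF; first by rewrite big_ord0.
rewrite big_ord_recr /=; case Fm: (F ord_max); last first.
  by rewrite addn0; apply: IH => i /HF.
have le_m : (\sum_(i < m) F (widen_ord (leqnSn m) i) <= m)%N.
  rewrite -[X in (_ <= X)%N]card_ord -sum1_card.
  by apply: leq_sum => i _; case: (F _).
by rewrite addn1; apply: leq_ltn_trans le_m (HF _ Fm).
Qed.

Lemma count_above (m h : nat) (F : 'I_m -> bool) :
  (forall i : 'I_m, F i -> m <= i + h)%N -> (\sum_(i < m) F i <= h)%N.
Proof.
move=> HF; rewrite (reindex_inj rev_ord_inj) /=.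
by apply: count_below => i /HF /=; have := ltn_ord i; lia.
Qed.

Lemma signed_term_bound (dag c gv : int) (j : nat) :
  dag = 1 \/ dag = -1 -> `|c| <= j%:Z ->
  dag * (c * gv) <=
    (j%:Z - 1) * `|gv| + (if c == dag * sgz gv * j%:Z then `|gv| else 0).
Proof.
by move=> Hdag Hc; case: Hdag => ->; case: sgzP => Hg; case: eqP => Hcj; nia.
Qed.

Section Lemma46.
Context {Gam : cgroup} {n : nat} {M : 'I_n -> nat} {g : 'I_n -> 'I_n -> ZG Gam}.
Context {N : nat} {P : Gam -> Prop}.
Hypothesis P_semigroup : forall p q, P p -> P q -> P (cg_mul p q).
Hypothesis P_supp : forall k m a, g k m a != 0 -> P a.
Context {dag : int} {j : nat} {s : Gam} {k : 'I_n} {x : Gam -> 'I_n -> int}.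

Definition h_indicator (m : 'I_n) (a : Gam) : bool :=
  asbool (exists y c,
    Zdag M g N (dag * sgz (g k m a)) j (cg_mul s a) m y c /\
    (forall t, in_sPbar P (cg_mul s a) t -> forall m', y t m' = x t m')).

Lemma h_fun_int :
  (h_fun M g N P dag j s k x)%:Z =
  \sum_(m < n) \sum_(a <- zg_usupp (g k m)) (if h_indicator m a then `|g k m a| else 0).
Proof.
rewrite /h_fun (big_morph Posz PoszD (erefl _)); apply: eq_bigr => m _.
rewrite (big_morph Posz PoszD (erefl _)) big_mkcond; apply: eq_bigr => a _.
rewrite -/(h_indicator m a); case: eqP => [->|_] /=; first by case: ifP.
by case: ifP; rewrite ?muln1 ?muln0 // abszE.
Qed.

(* If c attains the extreme value dag sgn(g_a) j at (sa, m), then (y, c) itself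
   witnesses the (a,m)-indicator of h, since s a Pbar is contained in s P. *)
Lemma h_indicator_witness {y c} {m : 'I_n} {a : Gam} :
  Zdag M g N dag j s k y c ->
  (forall t, in_sP P s t -> forall m', y t m' = x t m') ->
  g k m a != 0 -> c (cg_mul s a) m = dag * sgz (g k m a) * j%:Z ->
  h_indicator m a.
Proof.
move=> [HZ [Hc _]] agree ga cext; apply/asboolP; exists y, c.
split; first by split; last split.
have Pa := P_supp _ _ _ ga.
move=> t [->|[p [Pp ->]]] m'; apply: agree.
  by exists a.
by exists (cg_mul a p); split; [exact: P_semigroup|rewrite cg_mulA].
Qed.

Lemma signed_sum_bound {y c} :
  dag = 1 \/ dag = -1 -> Zdag M g N dag j s k y c ->
  (forall t, in_sP P s t -> forall m', y t m' = x t m') ->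
  dag * (\sum_(m < n) \sum_(a <- zg_usupp (g k m)) c (cg_mul s a) m * g k m a)
  <= (j%:Z - 1) * (\sum_(m < n) zg_norm1 (g k m))%N%:Z
     + (h_fun M g N P dag j s k x)%:Z.
Proof.
move=> Hdag HZ agree; have [_ [Hc _]] := HZ.
have norm_int : (\sum_(m < n) zg_norm1 (g k m))%N%:Z =
                \sum_(m < n) \sum_(a <- zg_usupp (g k m)) `|g k m a|.
  rewrite (big_morph Posz PoszD (erefl _)); apply: eq_bigr => m _.
  rewrite /zg_norm1 (big_morph Posz PoszD (erefl _)).
  by apply: eq_bigr => a _; rewrite abszE.
rewrite norm_int h_fun_int mulr_sumr mulr_sumr -big_split /=.
apply: ler_sum => m _; rewrite mulr_sumr mulr_sumr -big_split /=.
apply: ler_sum => a _.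
apply: le_trans (@signed_term_bound _ _ (g k m a) _ Hdag (Hc _ _)) _.
rewrite lerD2l; case: eqP => cext; last by case: ifP.
have [ga|ga] := eqVneq (g k m a) 0; first by rewrite ga normr0; case: ifP.
by rewrite (h_indicator_witness HZ agree ga cext).
Qed.

(* Every index i counted by u^dag_k(x) lies below h^dag_k(x) when dag = +1,
   and at or above M_k - h^dag_k(x) when dag = -1: read off the (s,k)
   coordinate of y + c f^*, which lies in [0, M_k). *)
Lemma u_index_bound {B : Gam -> 'I_n -> Prop} {i : nat} {y c} :
  dag = 1 \/ dag = -1 -> (1 <= j)%N ->
  (\sum_(m < n) zg_norm1 (g k m) < M k)%N ->
  ZdagBi M g N dag j s k B i y c ->
  (forall t, in_sP P s t -> forall m', y t m' = x t m') ->
  (dag = 1 -> (i < h_fun M g N P dag j s k x)%N) /\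
  (dag = -1 -> (M k <= i + h_fun M g N P dag j s k x)%N).
Proof.
move=> Hdag j_ge1 M_dom [[HZ _] ysk] agree.
set h := h_fun M g N P dag j s k x.
have bound := signed_sum_bound Hdag HZ agree; rewrite -/h in bound.
have [[_ [_ Yyc]] [_ csk]] := HZ.
have := Yyc s k; rewrite rvmul_fstar_at csk ysk -/h.
set T := \sum_(m < n) _ in bound *; set W := (\sum_(m < n) _)%N in bound M_dom.
have WM : (j%:Z - 1) * W%:Z <= (j%:Z - 1) * (M k)%:Z.
  by apply: ler_wpM2l; [lia | rewrite lez_nat ltnW].
by move=> range; split => Hd; rewrite Hd in bound range; nia.
Qed.
End Lemma46.

Theorem lemma4p6
  (Gam : cgroup)
  (* Gam is (countable and) infinite *)
  (Gam_inf : forall s : seq Gam, exists t, t \notin s)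
  (n : nat) (M : 'I_n -> nat) (g : 'I_n -> 'I_n -> ZG Gam)
  (M_pos : forall k, (0 < M k)%N)
  (M_dom : forall k, (\sum_(m < n) zg_norm1 (g k m) < M k)%N)
  (P : Gam -> Prop)
  (P_semigroup : forall p q, P p -> P q -> P (cg_mul p q))
  (P_noe : ~ P cg_one)
  (P_supp : forall k m a, g k m a != 0 -> P a)
  (N : nat)
  (N_big : exists F, is_l1_inverse (fstar M g) F /\
     (((\max_(k < n) M k)%:R)%:E * norm1inf F <= (N%:R)%:E)%E)
  (j : nat) (Hj : (1 <= j <= N)%N) (s : Gam) (k : 'I_n)
  (dag : int) (Hdag : dag = 1 \/ dag = -1)
  (x : Gam -> 'I_n -> int)
  (Hx : forall t, in_sP P s t -> forall m, 0 <= x t m < (M m)%:Z) :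
  (u_fun M g N P dag j s k x <= h_fun M g N P dag j s k x)%N.
Proof.
have j_ge1 : (1 <= j)%N by case/andP: Hj.
rewrite /u_fun; case: (Hdag) => Hd.
- apply: count_below => i /asboolP [y [c [[B [_ HB]] agree]]].
  have [below _] := u_index_bound (dag := dag) (x := x)
    P_semigroup P_supp Hdag j_ge1 (M_dom k) HB agree.
  exact: below Hd.
- apply: count_above => i /asboolP [y [c [[B [_ HB]] agree]]].
  have [_ above] := u_index_bound (dag := dag) (x := x)
    P_semigroup P_supp Hdag j_ge1 (M_dom k) HB agree.
  exact: above Hd.
Qed.
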